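(* In the triangle $T_2$, every individual entry appears at the head (column $0$) of infinitely many rows: for every positive integer $x$ and every $c\in\{0,\dots,x-1\}$, the entry located in row $x$, column $c$ of $T_2$ occupies column $0$ of row $y$ for infinitely many $y$.
   Context: For a positive integer $m$, the triangle $T_m$ is an array whose row $x$ ($x=1,2,\dots$) has $x$ entries, in columns $0,\dots,x-1$. Row $1$ is the single entry $1$. For $x>1$, row $x$ is obtained from row $x-1$ by rotating it cyclically left by $m$ positions (the entry in column $c$ of row $x-1$ moves to column $(c-m)\bmod(x-1)\in\{0,\dots,x-2\}$ of row $x$), then appending in column $x-1$ a new entry equal to $1$ plus the entry in column $0$ of row $x-1$. Entries are regarded as individual objects keeping their identity as they move from row to row. Here $m=2$. *)

From mathcomp Require Import all_boot.
Set Implicit Arguments. Unset Strict Implicit. Unset Printing Implicit Defensive.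

(* Entries are objects; we identify each entry by the row
   in which it was created (its "birth row"): row 1's single entry has
   identity 1, and the entry appended in column x-1 of row x has identity x.
   [Trow m x] is the list (indexed by columns 0..x-1) of the identities of
   the entries of row x.  Row x+1 is obtained from row x (which has x
   entries) by rotating it cyclically left by m positions (MathComp's
   [rot k s] = drop k s ++ take k s moves column c to column (c - k) mod
   size s; rotating by m equals rotating by m mod x), then appending the new
   entry (identity x+1).  Row 0 is a dummy (empty) row. *)
Fixpoint Trow (m x : nat) : seq nat :=
  match x with
  | 0 => [::]
  | 1 => [:: 1]
  | x'.+1 => rcons (rot (m %% x') (Trow m x')) x
  end.

Definition Tentry (m x c : nat) : nat := nth 0 (Trow m x) c.

(* Sanity checks (identities are unique, so equality of identities means
   being the same entry). *)
Example Trow_2_5 : Trow 2 5 = [:: 2; 4; 3; 1; 5].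
Proof. reflexivity. Qed.

(* Once the row length y exceeds 2, passing from row y to row y+1 moves an
   entry from column q to column q-2 when q >= 2, and from column q < 2 to
   column q+y-2.  So an entry in an even column descends to column 0, and an
   entry in column 1 of an odd row n reappears in the even column n-1 and
   then descends to column 0.  From column 1 of an even row 2p it reappears
   in the odd column 2p-1 and descends to column 1 of row 3p: each such
   round removes one factor 2 from the row index, so every entry eventually
   reaches the head.  Since rows only ever permute and extend the previous
   row, an entry is present in every later row, so this happens after any
   given row. *)
From mathcomp Require Import all_boot.
From mathcomp Require Import zify.

Lemma nth_rot_lt (T : Type) (x0 : T) (s : seq T) k i :
  k <= size s -> i < size s - k -> nth x0 (rot k s) i = nth x0 s (k + i).
Proof.
by move=> le_ks lt_i; rewrite /rot nth_cat size_drop lt_i nth_drop.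
Qed.

Lemma nth_rot_ge (T : Type) (x0 : T) (s : seq T) k i :
  k <= size s -> size s - k <= i -> i < size s ->
  nth x0 (rot k s) i = nth x0 s (i - (size s - k)).
Proof.
move=> le_ks ge_i lt_i.
by rewrite /rot nth_cat size_drop ltnNge ge_i /= nth_take //; lia.
Qed.

Section Triangle.

Variable m : nat.

Lemma Trow_S y : 0 < y -> Trow m y.+1 = rcons (rot (m %% y) (Trow m y)) y.+1.
Proof. by case: y. Qed.

Lemma size_Trow y : size (Trow m y) = y.
Proof.
elim: y => [|[|y] IH] //.
by rewrite Trow_S // size_rcons size_rot IH.
Qed.

Lemma Trow_subset x z : x <= z -> {subset Trow m x <= Trow m z}.
Proof.
move=> /subnK <-; elim: (z - x) => [|d IH] a a_in; first by rewrite add0n.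
rewrite addSn; case: (d + x) (IH a a_in) => [|y] a_in_y; first by [].
by rewrite Trow_S // mem_rcons inE mem_rot a_in_y orbT.
Qed.

Lemma Tentry_S_dvd y q : y %| m -> q < y -> Tentry m y.+1 q = Tentry m y q.
Proof.
move=> dvd_ym lt_qy; have y_gt0 : 0 < y by case: y lt_qy {dvd_ym}.
rewrite /Tentry Trow_S // nth_rcons size_rot size_Trow lt_qy.
by move/eqP: dvd_ym => ->; rewrite rot0.
Qed.

Lemma Tentry_S_high y q : m < y -> m <= q < y ->
  Tentry m y q = Tentry m y.+1 (q - m).
Proof.
move=> lt_my /andP[le_mq lt_qy].
rewrite /Tentry Trow_S; last lia.
rewrite nth_rcons size_rot size_Trow ifT; last lia.
rewrite modn_small // nth_rot_lt ?size_Trow; try lia.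
by congr nth; lia.
Qed.

Lemma Tentry_S_low y q : m < y -> q < m ->
  Tentry m y q = Tentry m y.+1 (q + y - m).
Proof.
move=> lt_my lt_qm.
rewrite /Tentry Trow_S; last lia.
rewrite nth_rcons size_rot size_Trow ifT; last lia.
rewrite modn_small // nth_rot_ge ?size_Trow; try lia.
by congr nth; lia.
Qed.

Lemma Tentry_shift_down x k r : m * k + r < x ->
  Tentry m x (m * k + r) = Tentry m (x + k) r.
Proof.
elim: k x => [|k IH] x lt_x; first by rewrite muln0 addn0.
rewrite Tentry_S_high; try lia.
have -> : m * k.+1 + r - m = m * k + r by lia.
by rewrite IH ?addSnnS //; lia.
Qed.

End Triangle.

Lemma Tentry2_col1_odd n : odd n -> 3 <= n ->
  Tentry 2 n 1 = Tentry 2 (n.+1 + n./2) 0.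
Proof.
move=> n_odd n_ge3; have := odd_double_half n; rewrite n_odd => n_eq.
rewrite Tentry_S_low //.
have -> : 1 + n - 2 = 2 * n./2 + 0 by lia.
by rewrite Tentry_shift_down //; lia.
Qed.

Lemma Tentry2_col1_double p : 0 < p -> Tentry 2 p.*2 1 = Tentry 2 (3 * p) 1.
Proof.
move=> p_gt0; case: (eqVneq p 1) => [-> | p_neq1].
  by rewrite -(@Tentry_S_dvd 2 2 1).
rewrite Tentry_S_low //; last lia.
have -> : 1 + p.*2 - 2 = 2 * p.-1 + 1 by lia.
rewrite Tentry_shift_down; last lia.
by congr Tentry; lia.
Qed.

Lemma Tentry2_col1_reaches_head_pow k o : odd o -> 2 <= 2 ^ k * o ->
  exists2 y, 2 ^ k * o <= y & Tentry 2 y 0 = Tentry 2 (2 ^ k * o) 1.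
Proof.
elim: k o => [|k IH] o o_odd.
  rewrite expn0 mul1n => o_ge2.
  have o_ge3 : 3 <= o by case: o o_odd o_ge2 => [|[|[|]]].
  by exists (o.+1 + o./2); [lia | rewrite Tentry2_col1_odd].
rewrite expnS -mulnA mul2n => n_ge2.
rewrite Tentry2_col1_double; last lia.
have -> : 3 * (2 ^ k * o) = 2 ^ k * (3 * o) by rewrite mulnCA.
have o3_odd : odd (3 * o) by rewrite oddM o_odd.
have [|y le_y <-] := IH _ o3_odd; first by rewrite mulnCA; lia.
by exists y => //; rewrite mulnCA in le_y; lia.
Qed.

Lemma Tentry2_col1_reaches_head n : 2 <= n ->
  exists2 y, n <= y & Tentry 2 y 0 = Tentry 2 n 1.
Proof.
move=> n_ge2; have [o o_odd n_eq] := pfactor_coprime (isT : prime 2) (ltnW n_ge2).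
rewrite coprime2n in o_odd; rewrite n_eq mulnC in n_ge2 *.
exact: Tentry2_col1_reaches_head_pow.
Qed.

Lemma Tentry2_reaches_head x c : c < x ->
  exists2 y, x <= y & Tentry 2 y 0 = Tentry 2 x c.
Proof.
move=> lt_cx; have c_eq : 2 * c./2 + odd c = c.
  by rewrite addnC mul2n odd_double_half.
rewrite -c_eq Tentry_shift_down ?c_eq //.
case c_odd: (odd c) c_eq => c_eq /=; last by exists (x + c./2); [lia|].
have [|y le_y <-] := Tentry2_col1_reaches_head (x + c./2); first lia.
by exists y; first lia.
Qed.

Theorem mainTheorem4 :
  forall x c : nat, 0 < x -> c < x ->
  forall N : nat, exists y : nat, N <= y /\ Tentry 2 y 0 = Tentry 2 x c.
Proof.
move=> x c _ lt_cx N; set z := maxn x N.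
have /(@Trow_subset 2 _ _ (leq_maxl x N)) in_z : Tentry 2 x c \in Trow 2 x.
  by rewrite mem_nth // size_Trow.
have lt_iz : index (Tentry 2 x c) (Trow 2 z) < z.
  by rewrite -{2}(size_Trow 2 z) index_mem.
have [y le_zy head_y] := Tentry2_reaches_head _ _ lt_iz.
exists y; split; first by apply: leq_trans le_zy; exact: leq_maxr.
by rewrite head_y /Tentry nth_index.
Qed.
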